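(* Let $\alpha_1,\dots,\alpha_4$ be constants, $H=H(t,t^-,q,q^-,p,p^-)$ smooth, and $X=\xi\partial_t+\eta\partial_q+\nu\partial_p$ (coefficients functions of $(t,q,p)$) such that $\Omega=0$. Let $C$ and $P$ be as defined below. If, on the solutions of the local extremal equation $F_H=\xi\frac{\delta\tilde H}{\delta t}+\eta\frac{\delta\tilde H}{\delta q}+\nu\frac{\delta\tilde H}{\delta p}=0$, one has $D(C)=(S_+-1)W$ for some function $W(t,t^-,q,q^-,p,p^-,\dot q,\dot q^-,\dot p,\dot p^-)$, then $J=P-W$ is a difference first integral, i.e. $(S_+-1)J=0$ on the solutions of $F_H=0$.
   Context: Constant delay $\tau>0$; $t^\pm=t\pm\tau$, $f^\pm=f(t\pm\tau)$; scalar $q,p$. $S_\pm$ are the forward/backward shift operators on expressions; $\xi^\pm=S_\pm(\xi)$ etc.; $H^+=S_+(H)$. $D$ is the total derivative acting on variables at $t^-,t,t^+$. $\tilde H=p^{-}(\alpha_{1}\dot{q}+\alpha_{2}\dot{q}^{-})+p(\alpha_{3}\dot{q}+\alpha_{4}\dot{q}^{-})-H$; $\frac{\delta\tilde H}{\delta p}=\alpha_1\dot q^++(\alpha_2+\alpha_3)\dot q+\alpha_4\dot q^--\partial_p(H+H^+)$, $\frac{\delta\tilde H}{\delta q}=-\big(\alpha_4\dot p^++(\alpha_2+\alpha_3)\dot p+\alpha_1\dot p^-+\partial_q(H+H^+)\big)$, $\frac{\delta\tilde H}{\delta t}=D[\alpha_2(p\dot q-p^-\dot q^-)+\alpha_4(p^+\dot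 q-p\dot q^-)]+D(H)-\partial_t(H+H^+)$. $\Omega=\nu^{-}(\alpha_{1}\dot{q}+\alpha_{2}\dot{q}^{-})+p^{-}(\alpha_{1}D(\eta)+\alpha_{2}D(\eta^{-}))+\nu(\alpha_{3}\dot{q}+\alpha_{4}\dot{q}^{-})+p(\alpha_{3}D(\eta)+\alpha_{4}D(\eta^{-}))+(\alpha_{2}p^{-}+\alpha_{4}p)\dot{q}^{-}D(\xi-\xi^{-})-\xi H_t-\eta H_q-\nu H_p-\xi^{-}H_{t^-}-\eta^{-}H_{q^-}-\nu^{-}H_{p^-}-HD(\xi)$. $C=\eta(\alpha_{4}p^{+}+(\alpha_{2}+\alpha_{3})p+\alpha_{1}p^{-})-\xi\big(\alpha_{2}(p\dot{q}-p^{-}\dot{q}^{-})+\alpha_{4}(p^{+}\dot{q}-p\dot{q}^{-})+H\big)$, $P=(\alpha_{2}p^{-}+\alpha_{4}p)D(\eta^{-})+\nu^{-}(\alpha_{1}\dot{q}+\alpha_{2}\dot{q}^{-})-(\alpha_{2}p^{-}+\alpha_{4}p)\dot{q}^{-}D(\xi^{-})-\xi^{-}H_{t^-}-\eta^{-}H_{q^-}-\nu^{-}H_{p^-}$. Equations are considered with $t^+-t=t-t^-=\tau$. *)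

From HB Require Import structures.
From mathcomp Require Import all_boot all_order all_algebra.
From mathcomp Require Import all_classical all_reals all_analysis.
Set Implicit Arguments. Unset Strict Implicit. Unset Printing Implicit Defensive.
Import Order.TTheory GRing.Theory Num.Theory.
Import numFieldNormedType.Exports.
Local Open Scope ring_scope.

Section Defs.
Variable R : realType.

Fixpoint iter_dir (V : normedModType R) (vs : seq V) (f : V -> R) : V -> R :=
  if vs is v :: vs' then 'D_v (iter_dir vs' f) else f.

Definition smoothV (V : normedModType R) (f : V -> R) : Prop :=
  forall (vs : seq V) (x : V), differentiable (iter_dir vs f) x.

Definition uncurry3 (f : R -> R -> R -> R) (x : 'rV[R]_3) : R :=
  f (x ord0 (inord 0)) (x ord0 (inord 1)) (x ord0 (inord 2)).
Definition uncurry6 (f : R -> R -> R -> R -> R -> R -> R) (x : 'rV[R]_6) : R :=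
  f (x ord0 (inord 0)) (x ord0 (inord 1)) (x ord0 (inord 2))
    (x ord0 (inord 3)) (x ord0 (inord 4)) (x ord0 (inord 5)).

Definition smooth1 (f : R -> R) : Prop :=
  forall (n : nat) (x : R), derivable (iter n (@derive1 R R) f) x 1.
Definition smooth3 (f : R -> R -> R -> R) : Prop := smoothV (uncurry3 f).
Definition smooth6 (f : R -> R -> R -> R -> R -> R -> R) : Prop :=
  smoothV (uncurry6 f).

Definition Hfun := R -> R -> R -> R -> R -> R -> R.
Definition H_t   (H : Hfun) a b c d e f := derive1 (fun x => H x b c d e f) a.
Definition H_tm  (H : Hfun) a b c d e f := derive1 (fun x => H a x c d e f) b.
Definition H_q   (H : Hfun) a b c d e f := derive1 (fun x => H a b x d e f) c.
Definition H_qm  (H : Hfun) a b c d e f := derive1 (fun x => H a b c x e f) d.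
Definition H_p   (H : Hfun) a b c d e f := derive1 (fun x => H a b c d x f) e.
Definition H_pm  (H : Hfun) a b c d e f := derive1 (fun x => H a b c d e x) f.

Variables (tau a1 a2 a3 a4 : R) (H : Hfun) (xi eta nu : R -> R -> R -> R)
          (q p : R -> R).

Definition atH (G : Hfun) (t : R) : R :=
  G t (t - tau) (q t) (q (t - tau)) (p t) (p (t - tau)).
Definition atX (c : R -> R -> R -> R) (t : R) : R := c t (q t) (p t).
Definition atXm (c : R -> R -> R -> R) (t : R) : R := atX c (t - tau).

Definition qd := derive1 q.
Definition pd := derive1 p.
Definition Dtot (f : R -> R) (t : R) : R := derive1 f t.

Definition Omega (t : R) : R :=
  atXm nu t * (a1 * qd t + a2 * qd (t - tau))
  + p (t - tau) * (a1 * Dtot (atX eta) t + a2 * Dtot (atXm eta) t)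
  + atX nu t * (a3 * qd t + a4 * qd (t - tau))
  + p t * (a3 * Dtot (atX eta) t + a4 * Dtot (atXm eta) t)
  + (a2 * p (t - tau) + a4 * p t) * qd (t - tau)
      * Dtot (fun s => atX xi s - atXm xi s) t
  - atX xi t * atH (H_t H) t - atX eta t * atH (H_q H) t
  - atX nu t * atH (H_p H) t
  - atXm xi t * atH (H_tm H) t - atXm eta t * atH (H_qm H) t
  - atXm nu t * atH (H_pm H) t
  - atH H t * Dtot (atX xi) t.

Definition Gterm (t : R) : R :=
  a2 * (p t * qd t - p (t - tau) * qd (t - tau))
  + a4 * (p (t + tau) * qd t - p t * qd (t - tau)).

(* variational derivatives of tilde H along the trajectory;
   note  d_t (H + H^+) = H_t + (H_{t^-})^+, etc. *)
Definition varH_t (t : R) : R :=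
  Dtot Gterm t + Dtot (atH H) t - (atH (H_t H) t + atH (H_tm H) (t + tau)).
Definition varH_q (t : R) : R :=
  - (a4 * pd (t + tau) + (a2 + a3) * pd t + a1 * pd (t - tau)
     + (atH (H_q H) t + atH (H_qm H) (t + tau))).
Definition varH_p (t : R) : R :=
  a1 * qd (t + tau) + (a2 + a3) * qd t + a4 * qd (t - tau)
  - (atH (H_p H) t + atH (H_pm H) (t + tau)).

Definition F_H (t : R) : R :=
  atX xi t * varH_t t + atX eta t * varH_q t + atX nu t * varH_p t.

Definition C_int (t : R) : R :=
  atX eta t * (a4 * p (t + tau) + (a2 + a3) * p t + a1 * p (t - tau))
  - atX xi t * (Gterm t + atH H t).

Definition P_int (t : R) : R :=
  (a2 * p (t - tau) + a4 * p t) * Dtot (atXm eta) t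
  + atXm nu t * (a1 * qd t + a2 * qd (t - tau))
  - (a2 * p (t - tau) + a4 * p t) * qd (t - tau) * Dtot (atXm xi) t
  - atXm xi t * atH (H_tm H) t - atXm eta t * atH (H_qm H) t
  - atXm nu t * atH (H_pm H) t.

Definition Wfun := R -> R -> R -> R -> R -> R -> R -> R -> R -> R -> R.
Definition atW (W : Wfun) (t : R) : R :=
  W t (t - tau) (q t) (q (t - tau)) (p t) (p (t - tau))
    (qd t) (qd (t - tau)) (pd t) (pd (t - tau)).

End Defs.

From HB Require Import structures.
From mathcomp Require Import all_boot all_order all_algebra.
From mathcomp Require Import all_classical all_reals all_analysis.
From mathcomp Require Import ring lra.
Import Order.TTheory GRing.Theory Num.Theory.
Local Open Scope ring_scope.

(* The conclusion is an algebraic identity along every curve (q, p) that is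
   twice differentiable.  Omega splits as P plus a part Omega_unshifted that
   involves only the unshifted coefficients xi, eta, nu; expanding D(C) by the
   product rule then gives S_+ P = F_H + D(C) - Omega_unshifted, i.e.
   (S_+ - 1) P = F_H + D(C) - Omega.  On the solutions of F_H = 0, where
   Omega = 0 and D(C) = (S_+ - 1) W, this is (S_+ - 1)(P - W) = 0. *)

Section real_derivatives.
Context {R : realType}.
Implicit Types (f g : R -> R) (c t : R).

Lemma derive1_shift f c t : derive1 (fun s => f (s + c)) t = derive1 f (t + c).
Proof. by rewrite /derive1; under eq_fun do rewrite -addrA. Qed.

Lemma derivable_shift f c t :
  derivable f (t + c) 1 -> derivable (fun s => f (s + c)) t 1.
Proof.
move=> /derivable1_diffP df; apply/derivable1_diffP.
exact: (differentiable_comp (g := f)).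
Qed.

Lemma derivable1D f g t : derivable f t 1 -> derivable g t 1 ->
  derivable (fun s => f s + g s) t 1.
Proof. exact: derivableD. Qed.

Lemma derivable1B f g t : derivable f t 1 -> derivable g t 1 ->
  derivable (fun s => f s - g s) t 1.
Proof. exact: derivableB. Qed.

Lemma derivable1M f g t : derivable f t 1 -> derivable g t 1 ->
  derivable (fun s => f s * g s) t 1.
Proof. exact: derivableM. Qed.

Lemma derivable1_cst c t : derivable (fun _ => c) t 1.
Proof. exact: derivable_cst. Qed.

Lemma derive1D f g t : derivable f t 1 -> derivable g t 1 ->
  derive1 (fun s => f s + g s) t = derive1 f t + derive1 g t.
Proof. by move=> df dg; rewrite derive1E (deriveD df dg) -!derive1E. Qed.

Lemma derive1B f g t : derivable f t 1 -> derivable g t 1 ->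
  derive1 (fun s => f s - g s) t = derive1 f t - derive1 g t.
Proof. by move=> df dg; rewrite derive1E (deriveB df dg) -!derive1E. Qed.

Lemma derive1M f g t : derivable f t 1 -> derivable g t 1 ->
  derive1 (fun s => f s * g s) t = f t * derive1 g t + g t * derive1 f t.
Proof. by move=> df dg; rewrite derive1E (deriveM df dg) -!derive1E. Qed.

Lemma derivable_smooth_comp n (F : 'rV[R]_n -> R) (x : R -> 'rV[R]_n) t :
  smoothV F -> (forall j, derivable (fun s => x s ord0 j) t 1) ->
  derivable (F \o x) t 1.
Proof.
move=> sF dx; apply/derivable1_diffP; apply: differentiable_comp; last exact: sF [::] _.
by apply/derivable1_diffP/derivable_mxP => i j; rewrite ord1.
Qed.

End real_derivatives.

Section along_curve.
Context {R : realType} {q p : R -> R}.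
Hypotheses (q_der : forall t, derivable q t 1) (p_der : forall t, derivable p t 1).

Lemma derivable_atX (c : R -> R -> R -> R) t :
  smooth3 c -> derivable (atX q p c) t 1.
Proof.
move=> sc; have -> : atX q p c =
    uncurry3 c \o (fun s => \row_(j < 3) [:: s; q s; p s]`_j).
  by apply/funext => s; rewrite /atX /uncurry3 /= !mxE !inordK.
apply: derivable_smooth_comp => // j; under eq_fun do rewrite mxE.
case: j => -[|[|[|//]]] ?; [exact: derivable_id|exact: q_der|exact: p_der].
Qed.

Lemma derivable_atH tau (G : Hfun R) t :
  smooth6 G -> derivable (atH tau q p G) t 1.
Proof.
move=> sG; have -> : atH tau q p G = uncurry6 G \o
    (fun s => \row_(j < 6) [:: s; s - tau; q s; q (s - tau); p s; p (s - tau)]`_j).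
  by apply/funext => s; rewrite /atH /uncurry6 /= !mxE !inordK.
apply: derivable_smooth_comp => // j; under eq_fun do rewrite mxE.
case: j => -[|[|[|[|[|[|//]]]]]] ?.
- exact: derivable_id.
- change (derivable (fun s => s - tau) t 1).
  by apply: derivable1B; [exact: derivable_id|exact: derivable1_cst].
- exact: q_der.
- exact: derivable_shift.
- exact: p_der.
- exact: derivable_shift.
Qed.

Lemma atXm_shift tau c t : atXm tau q p c (t + tau) = atX q p c t.
Proof. by rewrite /atXm addrK. Qed.

Lemma derive1_atXm_shift tau c t :
  Dtot (atXm tau q p c) (t + tau) = Dtot (atX q p c) t.
Proof. by rewrite /Dtot /atXm (derive1_shift (atX q p c) (- tau)) addrK. Qed.

End along_curve.

Section trajectory.
Context {R : realType} {tau a1 a2 a3 a4 : R} {H : Hfun R}.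
Context {xi eta nu : R -> R -> R -> R} {q p : R -> R}.
Hypotheses (H_smooth : smooth6 H) (xi_smooth : smooth3 xi) (eta_smooth : smooth3 eta).
Hypotheses (q_der : forall t, derivable q t 1) (p_der : forall t, derivable p t 1).
Hypothesis qd_der : forall t, derivable (qd q) t 1.

Local Notation X := (atX q p).
Local Notation Xm := (atXm tau q p).
Local Notation G := (Gterm tau a2 a4 q p).
Local Notation Hc := (atH tau q p H).

Local Ltac derivable_along := repeat match goal with
  | |- derivable (fun _ => _ - _) _ _ => apply: derivable1B
  | |- derivable (fun _ => _ + _) _ _ => apply: derivable1D
  | |- derivable (fun _ => _ * _) _ _ => apply: derivable1M
  | |- derivable (fun _ => ?c) _ _ => exact: derivable1_cst
  | |- derivable (fun _ => _ (_ + _)) _ _ => apply: derivable_shift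
  | |- derivable p _ _ => exact: p_der
  | |- derivable (qd q) _ _ => exact: qd_der
  end.

Definition momentum t := a4 * p (t + tau) + (a2 + a3) * p t + a1 * p (t - tau).

Lemma derivable_momentum t : derivable momentum t 1.
Proof. by rewrite /momentum; derivable_along. Qed.

Lemma derive1_momentum t :
  Dtot momentum t = a4 * pd p (t + tau) + (a2 + a3) * pd p t + a1 * pd p (t - tau).
Proof.
by rewrite /Dtot /momentum !derive1D ?derive1Ml ?derive1_shift; derivable_along.
Qed.

Lemma derivable_Gterm t : derivable G t 1.
Proof. by rewrite /Gterm; derivable_along. Qed.

Lemma derive1_C_int t :
  Dtot (C_int tau a1 a2 a3 a4 H xi eta q p) t =
    X eta t * Dtot momentum t + momentum t * Dtot (X eta) t
    - (X xi t * (Dtot G t + Dtot Hc t) + (G t + Hc t) * Dtot (X xi) t).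
Proof.
have dXeta s : derivable (X eta) s 1 by exact: derivable_atX.
have dXxi s : derivable (X xi) s 1 by exact: derivable_atX.
have dHc s : derivable Hc s 1 by exact: derivable_atH.
have dG := derivable_Gterm; have dm := derivable_momentum.
have dGHc x : derivable (fun s => G s + Hc s) x 1 := derivable1D _ _ _ (dG x) (dHc x).
rewrite /Dtot -[C_int _ _ _ _ _ _ _ _ _ _]/(fun s =>
  X eta s * momentum s - X xi s * (G s + Hc s)).
rewrite (derive1B _ _ _ (derivable1M _ _ _ (dXeta t) (dm t))
                        (derivable1M _ _ _ (dXxi t) (dGHc t))).
rewrite (derive1M _ _ _ (dXeta t) (dm t)) (derive1M _ _ _ (dXxi t) (dGHc t)).
by rewrite (derive1D _ _ _ (dG t) (dHc t)).
Qed.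

Definition Omega_unshifted t :=
  (a1 * p (t - tau) + a3 * p t) * Dtot (X eta) t
  + X nu t * (a3 * qd q t + a4 * qd q (t - tau))
  + (a2 * p (t - tau) + a4 * p t) * qd q (t - tau) * Dtot (X xi) t
  - X xi t * atH tau q p (H_t H) t - X eta t * atH tau q p (H_q H) t
  - X nu t * atH tau q p (H_p H) t - Hc t * Dtot (X xi) t.

(* Abstracting the partial derivatives of H before [ring] keeps it from
   unfolding [derive1] when it compares atoms, which is very slow. *)
Local Ltac ring_abstract_partials :=
  move: (H_t H) (H_tm H) (H_q H) (H_qm H) (H_p H) (H_pm H) => ? ? ? ? ? ?; ring.

Lemma Omega_split t :
  Omega tau a1 a2 a3 a4 H xi eta nu q p t =
  P_int tau a1 a2 a4 H xi eta nu q p t + Omega_unshifted t.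
Proof.
have dXm : Dtot (fun s => X xi s - Xm xi s) t = Dtot (X xi) t - Dtot (Xm xi) t.
  rewrite /Dtot derive1B //; first exact: derivable_atX.
  by apply: derivable_shift; exact: derivable_atX.
rewrite /Omega dXm /P_int /Omega_unshifted.
ring_abstract_partials.
Qed.

Lemma P_int_shift t :
  P_int tau a1 a2 a4 H xi eta nu q p (t + tau) =
  F_H tau a1 a2 a3 a4 H xi eta nu q p t + Dtot (C_int tau a1 a2 a3 a4 H xi eta q p) t
  - Omega_unshifted t.
Proof.
rewrite derive1_C_int derive1_momentum /F_H /varH_t /varH_q /varH_p.
rewrite /P_int /Omega_unshifted.
rewrite !derive1_atXm_shift !atXm_shift !addrK /momentum /Gterm.
ring_abstract_partials.
Qed.

End trajectory.

Theorem proposition2 (R : realType) (tau a1 a2 a3 a4 : R)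
  (H : Hfun R) (xi eta nu : R -> R -> R -> R) :
  0 < tau ->
  smooth6 H -> smooth3 xi -> smooth3 eta -> smooth3 nu ->
  (* Omega = 0 identically (along every smooth curve (q, p), at every t) *)
  (forall q p : R -> R, smooth1 q -> smooth1 p ->
     forall t : R, Omega tau a1 a2 a3 a4 H xi eta nu q p t = 0) ->
  forall W : Wfun R,
  (* D(C) = (S_+ - 1) W on the solutions of F_H = 0 *)
  (forall q p : R -> R, smooth1 q -> smooth1 p ->
     (forall t : R, F_H tau a1 a2 a3 a4 H xi eta nu q p t = 0) ->
     forall t : R,
       Dtot (C_int tau a1 a2 a3 a4 H xi eta q p) t
       = atW tau q p W (t + tau) - atW tau q p W t) ->
  (* then J = P - W satisfies (S_+ - 1) J = 0 on the solutions of F_H = 0 *)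
  forall q p : R -> R, smooth1 q -> smooth1 p ->
    (forall t : R, F_H tau a1 a2 a3 a4 H xi eta nu q p t = 0) ->
    forall t : R,
      (P_int tau a1 a2 a4 H xi eta nu q p (t + tau) - atW tau q p W (t + tau))
      - (P_int tau a1 a2 a4 H xi eta nu q p t - atW tau q p W t) = 0.
Proof.
move=> _ sH sxi seta _ Omega0 W DC q p sq sp FH0 t.
have dq : forall x, derivable q x 1 := sq 0%N.
have dqd : forall x, derivable (qd q) x 1 := sq 1%N.
have dp : forall x, derivable p x 1 := sp 0%N.
have := Omega0 q p sq sp t; rewrite (Omega_split sxi dq dp) => Omega0t.
rewrite (P_int_shift (a3 := a3) sH sxi seta dq dp dqd) FH0 (DC q p sq sp FH0 t).
lra.
Qed.
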